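(* Under the hypotheses of Lemma 1 (finite multi-set $\mathcal X=\{X_1,\dots,X_n\}$ of real symmetric $2\times2$ matrices, $\lambda_1$ the unique largest eigenvalue of $\mathcal X$, belonging to $X_1$, with $u_1=e_1$, $v_1=e_2$), let $S=\lim_{m\to\infty}\frac1m\log\sum_{i=1}^n\exp(mX_i)$. Then $e_2$ is an eigenvector of $S$ whose eigenvalue equals $\mu_*$, the largest eigenvalue of $\mathcal X$ (among the eigenvalues $\lambda_i,\mu_i$, excluding the occurrence $\lambda_1$ itself) whose associated eigenvector (i.e. $u_i$ for $\lambda_i$, $v_i$ for $\mu_i$) is not aligned with $e_1$.
   Context: $\exp$ and $\log$ denote the matrix exponential and matrix logarithm. Every real symmetric $2\times2$ matrix $X_i$ is written in spectral form $X_i=\lambda_i u_iu_i^{\mathsf T}+\mu_i v_iv_i^{\mathsf T}$ with $\lambda_i\ge\mu_i$, $u_i=(\cos\varphi_i,\sin\varphi_i)^{\mathsf T}$, $v_i=(-\sin\varphi_i,\cos\varphi_i)^{\mathsf T}$, $\varphi_i\in[-\pi/2,\pi/2]$. ''The eigenvalues of $\mathcal X$'' means the multi-set of all $2n$ numbers $\lambda_1,\mu_1,\dots,\lambda_n,\mu_n$; an eigenvalue is unique if it occurs exactly once in this multi-set. Two unit vectors are aligned if they are equal up to sign. $e_1=(1,0)^{\mathsf T}$, $e_2=(0,1)^{\mathsf T}$. *)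

From HB Require Import structures.
From mathcomp Require Import all_boot all_order all_algebra.
From mathcomp Require Import all_classical all_reals all_analysis.
Set Implicit Arguments. Unset Strict Implicit. Unset Printing Implicit Defensive.
Import Order.TTheory GRing.Theory Num.Theory.
Import numFieldNormedType.Exports.
Local Open Scope classical_set_scope.
Local Open Scope ring_scope.

Definition expm (R : realType) (n : nat) (A : 'M[R]_n.+1) : 'M[R]_n.+1 :=
  lim (series (fun k : nat => (k`!%:R)^-1 *: A ^+ k) @ \oo).

(* Matrix logarithm (of a symmetric positive definite matrix): the unique real
   symmetric matrix L with expm L = M (chosen by description; 0 if none). *)
Definition logm (R : realType) (n : nat) (M : 'M[R]_n.+1) : 'M[R]_n.+1 :=
  xget 0 [set L : 'M[R]_n.+1 | L^T = L /\ expm L = M].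

Definition e1 (R : realType) : 'cV[R]_2 := \col_i (if i == 0 then 1 else 0).
Definition e2 (R : realType) : 'cV[R]_2 := \col_i (if i == 0 then 0 else 1).

Definition uvec (R : realType) (phi : R) : 'cV[R]_2 :=
  \col_i (if i == 0 then cos phi else sin phi).
Definition vvec (R : realType) (phi : R) : 'cV[R]_2 :=
  \col_i (if i == 0 then - sin phi else cos phi).

Definition aligned (R : realType) (a b : 'cV[R]_2) : Prop := a = b \/ a = - b.

Definition candidate (R : realType) (n : nat) (lam mu phi : 'I_n.+1 -> R)
  (x : R) : Prop :=
  (exists i : 'I_n.+1, i != ord0 /\ ~ aligned (uvec (phi i)) (e1 R) /\ x = lam i)
  \/ (exists i : 'I_n.+1, ~ aligned (vvec (phi i)) (e1 R) /\ x = mu i).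

Definition is_mu_star (R : realType) (n : nat) (lam mu phi : 'I_n.+1 -> R)
  (x : R) : Prop :=
  candidate lam mu phi x /\ forall y, candidate lam mu phi y -> y <= x.

(* Write every eigenpair of every [X_i] as [(a_t, w_t)] with [w_t = (x_t, y_t)]
   a unit vector; then [sum_i exp (m X_i) = sum_t e^(m a_t) w_t w_t^T] is a
   symmetric 2x2 matrix, and its logarithm is [ln] of its two eigenvalues times
   the two spectral projections.  The term of [lambda_1] (with [w = e1])
   dominates all others by a factor [e^(-m gap)], so the larger eigenvalue lies
   between [e^(m lambda_1)] and [3/2 e^(m lambda_1)], and its eigenline tends to
   [e1] at rate [e^(-m gap) = O(1/m)].  The smaller eigenvalue is at most the
   [(2,2)] entry, a sum over the pairs with [y_t <> 0], hence [O(e^(m mu_* ))];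
   it is at least [det / eig_hi], and the determinant contains the cross term
   [e^(m lambda_1) e^(m mu_* ) y^2] of [e1] with the pair realizing [mu_*].
   After [ln] and division by [m], the limit is [diag (lambda_1, mu_* )]. *)

From HB Require Import structures.
From mathcomp Require Import all_boot all_order all_algebra.
From mathcomp Require Import all_classical all_reals all_analysis.
From mathcomp Require Import ring lra.
Set Implicit Arguments. Unset Strict Implicit. Unset Printing Implicit Defensive.
Import Order.TTheory GRing.Theory Num.Theory.
Import numFieldNormedType.Exports.
Local Open Scope classical_set_scope.
Local Open Scope ring_scope.

Section IdempotentPair.
Variables (R : realType) (n : nat).
Implicit Types (P Q : 'M[R]_n.+1).

Definition idem_pair P Q :=
  [/\ P * P = P, Q * Q = Q, P * Q = 0, Q * P = 0 & P + Q = 1].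

Lemma exprn_idem_pair P Q (a b : R) k : idem_pair P Q ->
  (a *: P + b *: Q) ^+ k = a ^+ k *: P + b ^+ k *: Q.
Proof.
case=> PP QQ PQ QP PQ1; elim: k => [|k IHk]; first by rewrite !expr0 !scale1r.
rewrite exprS IHk !mulrDl !mulrDr -!scalerAl -!scalerAr PP QQ PQ QP.
by rewrite !scaler0 add0r addr0 !scalerA !exprS.
Qed.

Lemma expm_idem_pair P Q (a b : R) : idem_pair P Q ->
  expm (a *: P + b *: Q) = expR a *: P + expR b *: Q.
Proof.
move=> PQ; rewrite /expm.
have -> : series (fun k : nat => (k`!%:R)^-1 *: (a *: P + b *: Q) ^+ k) =
          (fun N => series (exp_coeff a) N *: P + series (exp_coeff b) N *: Q).
  apply/funext => N; rewrite /series /= !scaler_suml -big_split /=.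
  apply: eq_bigr => k _; rewrite exprn_idem_pair // scalerDr !scalerA.
  by rewrite /exp_coeff ![_^-1 * _]mulrC.
by apply: cvg_lim => //; apply: cvgD; apply: cvgZr_tmp;
  exact: is_cvg_series_exp_coeff.
Qed.

Lemma scale_ln_eq (t l : R) (A : 'M[R]_n.+1) : 0 < t ->
  t *: A = expR l *: A -> ln t *: A = l *: A.
Proof.
move=> t_gt0 /eqP; rewrite -subr_eq0 -scalerBl scaler_eq0 subr_eq0.
by case/orP=> /eqP ->; rewrite ?expRK ?scaler0.
Qed.

(* Comparing the two decompositions block by block: [P' M Q] read from either
   side gives [t1 P'Q = e^l2 P'Q], etc. *)
Lemma ln_idem_pair P Q P' Q' (l1 l2 t1 t2 : R) :
  idem_pair P Q -> idem_pair P' Q' -> 0 < t1 -> 0 < t2 ->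
  expR l1 *: P + expR l2 *: Q = t1 *: P' + t2 *: Q' ->
  l1 *: P + l2 *: Q = ln t1 *: P' + ln t2 *: Q'.
Proof.
move=> [PP QQ PQ QP PQ1] [PP' QQ' PQ' QP' PQ1'] t1_gt0 t2_gt0 eM.
set M := t1 *: P' + t2 *: Q' in eM.
have P'M : P' * M = t1 *: P' by rewrite mulrDr -!scalerAr PP' PQ' scaler0 addr0.
have Q'M : Q' * M = t2 *: Q' by rewrite mulrDr -!scalerAr QQ' QP' scaler0 add0r.
have MP : M * P = expR l1 *: P by rewrite -eM mulrDl -!scalerAl PP QP scaler0 addr0.
have MQ : M * Q = expR l2 *: Q by rewrite -eM mulrDl -!scalerAl QQ PQ scaler0 add0r.
have block (A B : 'M[R]_n.+1) t l : 0 < t -> A * M = t *: A ->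
    M * B = expR l *: B -> ln t *: (A * B) = l *: (A * B).
  move=> t_gt0 AM MB; apply: scale_ln_eq => //.
  by rewrite scalerAl -AM -mulrA MB scalerAr.
have eP' : P' * (l1 *: P + l2 *: Q) = ln t1 *: P'.
  rewrite mulrDr -!scalerAr -(block _ _ t1 l1) -?(block _ _ t1 l2) //.
  by rewrite !scalerAr -mulrDr -scalerDr PQ1 -scalerAr mulr1.
have eQ' : Q' * (l1 *: P + l2 *: Q) = ln t2 *: Q'.
  rewrite mulrDr -!scalerAr -(block _ _ t2 l1) -?(block _ _ t2 l2) //.
  by rewrite !scalerAr -mulrDr -scalerDr PQ1 -scalerAr mulr1.
by rewrite -[LHS]mul1r -PQ1' mulrDl eP' eQ'.
Qed.

End IdempotentPair.

Lemma ord2P (i : 'I_2) : i = ord0 \/ i = ord_max.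
Proof. by case: i => [[|[|?]]] ? //=; [left|right]; apply/val_inj. Qed.

Ltac mx2_entries :=
  apply/matrixP; intros i j; case: (ord2P i) => ->; case: (ord2P j) => ->.

Section SymmetricTwoByTwo.
Variable R : realType.

Definition symmx (A B C : R) : 'M[R]_2 :=
  \matrix_(i, j) if i == ord0 then (if j == ord0 then A else B)
                 else (if j == ord0 then B else C).

(* The orthogonal projection onto the line of angle [theta], written in terms
   of [c = cos (2 theta)] and [s = sin (2 theta)]. *)
Definition line_proj (c s : R) : 'M[R]_2 :=
  symmx ((1 + c) / 2) (s / 2) ((1 - c) / 2).

Lemma line_proj_idem_pair c s : c ^+ 2 + s ^+ 2 = 1 ->
  idem_pair (line_proj c s) (line_proj (- c) (- s)).
Proof.
move=> cs1; split; mx2_entries; rewrite !mxE /= ?big_ord_recl ?big_ord0 /=.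
all: rewrite ?mxE /=; lra.
Qed.

Lemma symmx_trmx A B C : (symmx A B C)^T = symmx A B C.
Proof. by mx2_entries; rewrite !mxE. Qed.

Lemma symmxE (L : 'M[R]_2) : L^T = L ->
  L = symmx (L ord0 ord0) (L ord0 ord_max) (L ord_max ord_max).
Proof.
move=> /matrixP symL; mx2_entries; rewrite !mxE //=.
by rewrite -[LHS]symL mxE.
Qed.

Definition symmx_rad (A B C : R) := Num.sqrt (((A - C) / 2) ^+ 2 + B ^+ 2).

Lemma symmx_rad_sqr A B C : symmx_rad A B C ^+ 2 = ((A - C) / 2) ^+ 2 + B ^+ 2.
Proof. by rewrite sqr_sqrtr // addr_ge0 // sqr_ge0. Qed.

Lemma symmx_spectral A B C (r := symmx_rad A B C) : r != 0 ->
  let c := (A - C) / 2 / r in let s := B / r in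
  c ^+ 2 + s ^+ 2 = 1 /\
  symmx A B C = ((A + C) / 2 + r) *: line_proj c s
              + ((A + C) / 2 - r) *: line_proj (- c) (- s).
Proof.
move=> r_neq0 c s; split.
  have -> : c ^+ 2 + s ^+ 2 = (((A - C) / 2) ^+ 2 + B ^+ 2) / r ^+ 2.
    rewrite /c /s; field; exact: r_neq0.
  by rewrite -symmx_rad_sqr divff // sqrf_eq0.
by mx2_entries; rewrite !mxE /= /c /s; field; exact: r_neq0.
Qed.

Lemma symmx_spectral_ex (L : 'M[R]_2) : L^T = L ->
  exists l1 l2 c s, c ^+ 2 + s ^+ 2 = 1 /\
    L = l1 *: line_proj c s + l2 *: line_proj (- c) (- s).
Proof.
move=> /symmxE ->; set A := L _ _; set B := L _ _; set C := L _ _.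
have [r0|r_neq0] := eqVneq (symmx_rad A B C) 0; last first.
  by have [cs1 ->] := symmx_spectral r_neq0; do 4 eexists; split; first exact: cs1.
have : ((A - C) / 2) ^+ 2 + B ^+ 2 = 0 by rewrite -symmx_rad_sqr r0 expr0n.
move/eqP; rewrite paddr_eq0 ?sqr_ge0 // !sqrf_eq0 mulf_eq0 invr_eq0 pnatr_eq0 orbF.
rewrite subr_eq0 => /andP[/eqP AC /eqP B0].
exists A, A, 1, 0; split; first by rewrite expr1n expr0n addr0.
by mx2_entries; rewrite !mxE /= ?AC ?B0; lra.
Qed.

Lemma logm_spectral (M : 'M[R]_2) (t1 t2 c s : R) :
  c ^+ 2 + s ^+ 2 = 1 -> 0 < t1 -> 0 < t2 ->
  M = t1 *: line_proj c s + t2 *: line_proj (- c) (- s) ->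
  logm M = ln t1 *: line_proj c s + ln t2 *: line_proj (- c) (- s).
Proof.
move=> cs1 t1_gt0 t2_gt0 ->; have PQ := line_proj_idem_pair cs1.
apply: xget_unique.
  split; first by rewrite linearD !linearZ /= !symmx_trmx.
  by rewrite expm_idem_pair // !lnK ?posrE.
move=> L [/symmx_spectral_ex [l1 [l2 [c' [s' [cs1' ->]]]]] expL].
have PQ' := line_proj_idem_pair cs1'.
by apply: ln_idem_pair => //; rewrite -expm_idem_pair.
Qed.

End SymmetricTwoByTwo.

Section RealLemmas.
Variable R : realType.

Lemma cvg_div_nat (K : R) : (fun m : nat => K / m%:R) @ \oo --> 0.
Proof.
rewrite -(mulr0 K); apply: cvgMl_tmp; rewrite -cvg_shiftS; exact: cvg_harmonic.
Qed.

Lemma cvg_dist_le_div_nat (u : nat -> R) (l K : R) :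
  (\forall m \near \oo, `|u m - l| <= K / m%:R) -> u @ \oo --> l.
Proof.
move=> err; apply: (squeeze_cvgr (f := fun m => l - K / m%:R)
                                 (h := fun m => l + K / m%:R)).
- by apply: filterS err => m; rewrite ler_distl.
- by rewrite -[X in _ --> X]subr0; apply: cvgB; [exact: cvg_cst|exact: cvg_div_nat].
- by rewrite -[X in _ --> X]addr0; apply: cvgD; [exact: cvg_cst|exact: cvg_div_nat].
Qed.

Lemma dist_ln_div_nat_le (u L lo hi : R) (m : nat) : (0 < m)%N -> 0 < lo ->
  lo * expR (m%:R * L) <= u <= hi * expR (m%:R * L) ->
  `|ln u / m%:R - L| <= (`|ln lo| + `|ln hi|) / m%:R.
Proof.
move=> m_gt0 lo_gt0 /andP[lo_u u_hi].
have e_gt0 := expR_gt0 (m%:R * L).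
have mR_gt0 : 0 < m%:R :> R by rewrite ltr0n.
set q := u / expR (m%:R * L).
have lo_q : lo <= q by rewrite /q ler_pdivlMr.
have q_hi : q <= hi by rewrite /q ler_pdivrMr.
have q_gt0 : 0 < q := lt_le_trans lo_gt0 lo_q.
have -> : ln u / m%:R - L = ln q / m%:R.
  have -> : u = expR (m%:R * L) * q by rewrite /q mulrC divfK ?gt_eqF.
  rewrite lnM ?posrE // expRK mulrDl mulrAC divff ?gt_eqF // mul1r.
  by rewrite addrAC subrr add0r.
rewrite normrM normfV (gtr0_norm mR_gt0) ler_pM2r ?invr_gt0 //.
have ln_lo : ln lo <= ln q by rewrite ler_ln ?posrE.
have ln_hi : ln q <= ln hi by rewrite ler_ln ?posrE //; exact: lt_le_trans q_hi.
have := ler_norm (ln hi); have := ler_norm (- ln lo); rewrite normrN.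
have := normr_ge0 (ln lo); have := normr_ge0 (ln hi).
by rewrite ler_norml => *; apply/andP; split; lra.
Qed.

Lemma norm_le_sqrt_sumsqr (h b : R) : `|h| <= Num.sqrt (h ^+ 2 + b ^+ 2).
Proof. by rewrite -sqrtr_sqr ler_sqrt ?lerDl ?sqr_ge0 // addr_ge0 // sqr_ge0. Qed.

Lemma sqrt_sumsqr_le (h b : R) : Num.sqrt (h ^+ 2 + b ^+ 2) <= `|h| + `|b|.
Proof.
rewrite -[leRHS]ger0_norm ?addr_ge0 // -sqrtr_sqr ler_sqrt ?sqr_ge0 //.
by rewrite sqrrD !real_normK ?num_real // addrAC lerDl mulrn_wge0 // mulr_ge0.
Qed.

Lemma sum_le_card (T : finType) (P : pred T) (f : T -> R) (k : R) : 0 <= k ->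
  (forall t, P t -> f t <= k) -> \sum_(t | P t) f t <= #|T|%:R * k.
Proof.
move=> k_ge0 f_le; apply: le_trans (ler_sum _ f_le) _.
rewrite sumr_const -[k *+ _]mulr_natl; apply: ler_wpM2r => //.
by rewrite ler_nat max_card.
Qed.

Lemma finite_gap (T : finType) (a : T -> R) (t0 : T) :
  (forall t, t != t0 -> a t < a t0) ->
  exists2 d, 0 < d & forall t, t != t0 -> a t <= a t0 - d.
Proof.
move=> a_lt; case: (pickP (fun t => t != t0)) => [t1 t1_neq|none]; last first.
  by exists 1 => // t; rewrite none.
case: (@arg_maxP _ _ T t1 (fun t => t != t0) a t1_neq) => t2 t2_neq t2_max.
exists (a t0 - a t2); first by rewrite subr_gt0 a_lt.
by move=> t t_neq; rewrite opprB addrCA subrr addr0; exact: t2_max.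
Qed.

End RealLemmas.

Lemma line_proj_cvg (R : realType) (u v : nat -> R) (c s : R) :
  u @ \oo --> c -> v @ \oo --> s ->
  (fun m => line_proj (u m) (v m)) @ \oo --> line_proj c s.
Proof.
have lin (c' s' : R) : line_proj c' s' = line_proj 0 0
    + c' *: (line_proj 1 0 - line_proj 0 0) + s' *: (line_proj 0 1 - line_proj 0 0).
  by mx2_entries; rewrite !mxE /=; lra.
move=> uc vs; rewrite lin; under eq_fun do rewrite lin.
by apply: cvgD; [apply: cvgD; [exact: cvg_cst|]|]; exact: cvgZr_tmp.
Qed.

(* [a t] are eigenvalues with unit eigenvectors [(x t, y t)]; [sxx], [sxy],
   [syy] are the entries of [sum_t e^(m a t) (x t, y t) (x t, y t)^T] and
   [eig_hi], [eig_lo] its eigenvalues.  [t0] carries the top eigenvalue, with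
   eigenvector [e1], and [ts] the largest eigenvalue whose eigenvector is not
   aligned with [e1]. *)
Section DominantDirection.
Variables (R : realType) (T : finType) (a x y : T -> R) (t0 ts : T) (dl : R).
Hypotheses (xy1 : forall t, x t ^+ 2 + y t ^+ 2 = 1) (y_t0 : y t0 = 0)
  (dl_gt0 : 0 < dl) (gap : forall t, t != t0 -> a t <= a t0 - dl)
  (y_ts : y ts != 0) (ts_max : forall t, y t != 0 -> a t <= a ts).

Definition weight (m : nat) t := expR (m%:R * a t).
Definition sxx m := \sum_t weight m t * x t ^+ 2.
Definition sxy m := \sum_t weight m t * (x t * y t).
Definition syy m := \sum_t weight m t * y t ^+ 2.
Definition half_diff m := (sxx m - syy m) / 2.
Definition rad m := symmx_rad (sxx m) (sxy m) (syy m).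
Definition eig_hi m := (sxx m + syy m) / 2 + rad m.
Definition eig_lo m := (sxx m + syy m) / 2 - rad m.
Definition decay (m : nat) := expR (- (m%:R * dl)).
Let nT : R := #|T|%:R.

Lemma sqr_x_t0 : x t0 ^+ 2 = 1.
Proof. by have := xy1 t0; rewrite y_t0 expr0n addr0. Qed.

Lemma sqr_x_le1 t : x t ^+ 2 <= 1.
Proof. have := xy1 t; have := sqr_ge0 (y t); lra. Qed.

Lemma sqr_y_le1 t : y t ^+ 2 <= 1.
Proof. have := xy1 t; have := sqr_ge0 (x t); lra. Qed.

Lemma norm_xy_le1 t : `|x t * y t| <= 1.
Proof.
have := xy1 t; have := sqr_ge0 (x t - y t); have := sqr_ge0 (x t + y t).
by rewrite ler_norml => *; apply/andP; split; nra.
Qed.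

Lemma ts_neq_t0 : ts != t0.
Proof. by apply: contra y_ts => /eqP ->; rewrite y_t0. Qed.

Lemma sqr_y_ts_gt0 : 0 < y ts ^+ 2.
Proof. by rewrite lt_def sqr_ge0 sqrf_eq0 y_ts. Qed.

Lemma weight_gt0 m t : 0 < weight m t. Proof. exact: expR_gt0. Qed.

Lemma weight_gap m t : t != t0 -> weight m t <= weight m t0 * decay m.
Proof.
move=> t_neq; rewrite /weight /decay -expRD ler_expR.
have := gap t_neq; have : 0 <= m%:R :> R by []; nra.
Qed.

Lemma weight_le_ts m t : y t != 0 -> weight m t <= weight m ts.
Proof.
move=> yt; rewrite /weight ler_expR.
have := ts_max yt; have : 0 <= m%:R :> R by []; nra.
Qed.

Lemma decay_le m : (0 < m)%N -> decay m <= dl^-1 / m%:R.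
Proof.
move=> m_gt0; have mdl_gt0 : 0 < m%:R * dl by rewrite mulr_gt0 // ltr0n.
rewrite /decay expRN [dl^-1 / _]mulrC -invfM lef_pV2 ?posrE ?expR_gt0 //.
have := expR_ge1Dx (m%:R * dl); lra.
Qed.

Lemma decay_small (k q : R) : 0 < q -> \forall m \near \oo, k * decay m <= q.
Proof.
move=> q_gt0; apply: (cvgr_le (k * 0)); last by rewrite mulr0.
apply: cvgMl_tmp; apply: (@cvg_dist_le_div_nat _ _ _ dl^-1).
near=> m; rewrite subr0 ger0_norm ?expR_ge0 //; apply: decay_le.
by near: m; exact: nbhs_infty_gt.
Unshelve. all: by end_near.
Qed.

Lemma sxx_ge m : weight m t0 <= sxx m.
Proof.
rewrite /sxx (bigD1 t0) //= sqr_x_t0 mulr1 lerDl.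
by apply: sumr_ge0 => t _; rewrite mulr_ge0 ?sqr_ge0 // ltW ?weight_gt0.
Qed.

Lemma sxx_le m : sxx m <= weight m t0 + nT * (weight m t0 * decay m).
Proof.
rewrite /sxx (bigD1 t0) //= sqr_x_t0 mulr1 lerD2l.
apply: sum_le_card; first by rewrite mulr_ge0 // ltW ?expR_gt0.
move=> t t_neq; apply: le_trans (weight_gap m t_neq).
by rewrite ler_piMr ?sqr_x_le1 // ltW ?weight_gt0.
Qed.

Lemma syy_le m : syy m <= nT * weight m ts.
Proof.
apply: sum_le_card => [|t _]; first exact/ltW/weight_gt0.
have [->|yt] := eqVneq (y t) 0; first by rewrite expr0n mulr0 ltW ?weight_gt0.
apply: le_trans (weight_le_ts m yt).
by rewrite ler_piMr ?sqr_y_le1 // ltW ?weight_gt0.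
Qed.

Lemma syy_ge m : weight m ts * y ts ^+ 2 <= syy m.
Proof.
rewrite /syy (bigD1 ts) //= lerDl.
by apply: sumr_ge0 => t _; rewrite mulr_ge0 ?sqr_ge0 // ltW ?weight_gt0.
Qed.

Lemma sxy_le m : `|sxy m| <= nT * weight m ts.
Proof.
apply: le_trans (ler_norm_sum _ _ _) _.
apply: sum_le_card => [|t _]; first exact/ltW/weight_gt0.
have [->|yt] := eqVneq (y t) 0; first by rewrite !mulr0 normr0 ltW ?weight_gt0.
rewrite normrM gtr0_norm ?weight_gt0 //; apply: le_trans (weight_le_ts m yt).
by rewrite ler_piMr ?norm_xy_le1 // ltW ?weight_gt0.
Qed.

Lemma rad_ge m : `|half_diff m| <= rad m.
Proof. exact: norm_le_sqrt_sumsqr. Qed.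

Lemma rad_le m : rad m <= `|half_diff m| + `|sxy m|.
Proof. exact: sqrt_sumsqr_le. Qed.

Lemma eig_hi_lo m : eig_hi m * eig_lo m = sxx m * syy m - sxy m ^+ 2.
Proof.
have -> : eig_hi m * eig_lo m = ((sxx m + syy m) / 2) ^+ 2 - rad m ^+ 2.
  by rewrite /eig_hi /eig_lo; ring.
by rewrite /rad symmx_rad_sqr; field.
Qed.

Section LargeExponent.
Variable m : nat.
Hypotheses (m_gt0 : (0 < m)%N) (decay_quarter : nT * decay m <= 1 / 4)
  (decay_det : nT ^+ 2 * decay m <= y ts ^+ 2 / 2).

Lemma tail_le : nT * (weight m t0 * decay m) <= weight m t0 / 4.
Proof. by rewrite mulrCA ler_pM2l ?weight_gt0 // -div1r. Qed.

Lemma weight_ts_le : weight m ts <= weight m t0 * decay m.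
Proof. exact: weight_gap ts_neq_t0. Qed.

Lemma syy_le_tail : syy m <= nT * (weight m t0 * decay m).
Proof.
by apply: le_trans (syy_le m) _; apply: ler_wpM2l; rewrite ?weight_ts_le.
Qed.

Lemma sxy_le_tail : `|sxy m| <= nT * (weight m t0 * decay m).
Proof.
by apply: le_trans (sxy_le m) _; apply: ler_wpM2l; rewrite ?weight_ts_le.
Qed.

Lemma half_diff_ge : 3 / 8 * weight m t0 <= half_diff m.
Proof.
have := tail_le; have := syy_le_tail; have := sxx_ge m; rewrite /half_diff; lra.
Qed.

Lemma half_diff_ge0 : 0 <= half_diff m.
Proof. by apply: le_trans half_diff_ge; rewrite mulr_ge0 // ltW ?weight_gt0. Qed.

Lemma rad_ge_weight : 3 / 8 * weight m t0 <= rad m.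
Proof.
by apply: le_trans half_diff_ge _; apply: le_trans (rad_ge m); exact: ler_norm.
Qed.

Lemma rad_gt0 : 0 < rad m.
Proof. by apply: lt_le_trans rad_ge_weight; rewrite mulr_gt0 ?weight_gt0. Qed.

Lemma eig_hi_ge : weight m t0 <= eig_hi m.
Proof.
have := rad_ge m; have := ler_norm (half_diff m); have := sxx_ge m.
rewrite /eig_hi /half_diff; lra.
Qed.

Lemma eig_hi_le : eig_hi m <= 3 / 2 * weight m t0.
Proof.
have := rad_le m; rewrite (ger0_norm half_diff_ge0).
have := sxy_le_tail; have := tail_le; have := sxx_le m.
rewrite /eig_hi /half_diff; lra.
Qed.

Lemma eig_lo_le : eig_lo m <= nT * weight m ts.
Proof.
have := rad_ge m; rewrite (ger0_norm half_diff_ge0).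
have := syy_le m; rewrite /eig_lo /half_diff; lra.
Qed.

Lemma det_ge :
  weight m t0 * weight m ts * (y ts ^+ 2 / 2) <= sxx m * syy m - sxy m ^+ 2.
Proof.
have w0_ge0 := ltW (weight_gt0 m t0); have w1_ge0 := ltW (weight_gt0 m ts).
have prod_ge : weight m t0 * (weight m ts * y ts ^+ 2) <= sxx m * syy m.
  exact: ler_pM w0_ge0 (mulr_ge0 w1_ge0 (sqr_ge0 _)) (sxx_ge m) (syy_ge m).
have sqr_sxy_le : sxy m ^+ 2 <= weight m t0 * weight m ts * (nT ^+ 2 * decay m).
  rewrite -(ger0_norm (sqr_ge0 (sxy m))) normrX expr2.
  apply: le_trans (_ : (nT * weight m ts) * (nT * (weight m t0 * decay m)) <= _).
    by apply: ler_pM; rewrite ?sxy_le ?sxy_le_tail.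
  by rewrite le_eqVlt; apply/orP; left; apply/eqP; ring.
have : weight m t0 * weight m ts * (nT ^+ 2 * decay m)
       <= weight m t0 * weight m ts * (y ts ^+ 2 / 2).
  by apply: ler_wpM2l; rewrite // mulr_ge0.
have : weight m t0 * (weight m ts * y ts ^+ 2)
       = weight m t0 * weight m ts * (y ts ^+ 2 / 2) * 2 by field.
lra.
Qed.

(* The small eigenvalue is read off from [det = eig_hi * eig_lo]. *)
Lemma eig_lo_ge : y ts ^+ 2 / 3 * weight m ts <= eig_lo m.
Proof.
have eig_hi_gt0 : 0 < eig_hi m := lt_le_trans (weight_gt0 m t0) eig_hi_ge.
have -> : eig_lo m = (sxx m * syy m - sxy m ^+ 2) / eig_hi m.
  by rewrite -eig_hi_lo mulrC mulKf ?gt_eqF.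
rewrite ler_pdivlMr //; apply: le_trans det_ge.
apply: le_trans (_ : y ts ^+ 2 / 3 * weight m ts * (3 / 2 * weight m t0) <= _).
  apply: ler_wpM2l eig_hi_le.
  exact: mulr_ge0 (divr_ge0 (sqr_ge0 _) (ler0n _ 3)) (ltW (weight_gt0 _ _)).
by rewrite le_eqVlt; apply/orP; left; apply/eqP; field.
Qed.

Lemma div_rad_le_decay (e : R) : 0 <= e -> e <= nT * (weight m t0 * decay m) ->
  e / rad m <= 8 / 3 * nT * decay m.
Proof.
move=> e_ge0 e_le; rewrite ler_pdivrMr ?rad_gt0 //; apply: le_trans e_le _.
apply: le_trans (_ : 8 / 3 * nT * decay m * (3 / 8 * weight m t0) <= _).
  by rewrite le_eqVlt; apply/orP; left; apply/eqP; field.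
by apply: ler_wpM2l; rewrite ?rad_ge_weight // !mulr_ge0 // ltW ?expR_gt0.
Qed.

Lemma dist_cos_le : `|half_diff m / rad m - 1| <= 8 / 3 * nT * decay m.
Proof.
have rad_neq0 : rad m != 0 := lt0r_neq0 rad_gt0.
have -> : half_diff m / rad m - 1 = - ((rad m - half_diff m) / rad m).
  by field.
have := rad_ge m; rewrite normrN (ger0_norm half_diff_ge0) => hd_le.
rewrite ger0_norm ?divr_ge0 ?subr_ge0 ?(ltW rad_gt0) //.
apply: div_rad_le_decay; first by rewrite subr_ge0.
have := rad_le m; have := sxy_le_tail; rewrite (ger0_norm half_diff_ge0); lra.
Qed.

Lemma dist_sin_le : `|sxy m / rad m - 0| <= 8 / 3 * nT * decay m.
Proof.
rewrite subr0 normrM normfV (gtr0_norm rad_gt0).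
by apply: div_rad_le_decay; rewrite ?sxy_le_tail.
Qed.

Lemma dist_ln_eig_hi_le :
  `|ln (eig_hi m) / m%:R - a t0| <= (`|ln 1| + `|ln (3 / 2)|) / m%:R.
Proof.
apply: dist_ln_div_nat_le; rewrite // mul1r.
by apply/andP; split; [exact: eig_hi_ge|exact: eig_hi_le].
Qed.

Lemma dist_ln_eig_lo_le :
  `|ln (eig_lo m) / m%:R - a ts| <= (`|ln (y ts ^+ 2 / 3)| + `|ln nT|) / m%:R.
Proof.
apply: dist_ln_div_nat_le; rewrite // ?divr_gt0 ?sqr_y_ts_gt0 //.
by apply/andP; split; [exact: eig_lo_ge|exact: eig_lo_le].
Qed.

End LargeExponent.

Lemma large_exponent_eventually : \forall m \near \oo,
  [/\ (0 < m)%N, nT * decay m <= 1 / 4 & nT ^+ 2 * decay m <= y ts ^+ 2 / 2].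
Proof.
near=> m; split; near: m; first exact: nbhs_infty_gt.
  exact: decay_small.
by apply: decay_small; rewrite divr_gt0 ?sqr_y_ts_gt0.
Unshelve. all: by end_near.
Qed.

Lemma cvg_dist_le_large_exponent (u : nat -> R) (l K : R) :
  (forall m, (0 < m)%N -> nT * decay m <= 1 / 4 ->
     nT ^+ 2 * decay m <= y ts ^+ 2 / 2 -> `|u m - l| <= K / m%:R) ->
  u @ \oo --> l.
Proof.
move=> err; apply: cvg_dist_le_div_nat.
by apply: filterS large_exponent_eventually => m [m_gt0 d1 d2]; exact: err.
Qed.

Lemma ln_eig_hi_cvg : (fun m => ln (eig_hi m) / m%:R) @ \oo --> a t0.
Proof.
apply: cvg_dist_le_large_exponent => m m_gt0 d1 _.
exact: dist_ln_eig_hi_le m_gt0 d1.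
Qed.

Lemma ln_eig_lo_cvg : (fun m => ln (eig_lo m) / m%:R) @ \oo --> a ts.
Proof.
apply: cvg_dist_le_large_exponent => m m_gt0 d1 d2.
exact: dist_ln_eig_lo_le m_gt0 d1 d2.
Qed.

Lemma scaled_decay_le m : (0 < m)%N ->
  8 / 3 * nT * decay m <= 8 / 3 * nT / dl / m%:R.
Proof.
move=> m_gt0; rewrite -!mulrA; do 3 (apply: ler_wpM2l => //).
exact: decay_le.
Qed.

Lemma cos_cvg : (fun m => half_diff m / rad m) @ \oo --> (1 : R).
Proof.
apply: cvg_dist_le_large_exponent => m m_gt0 d1 d2.
exact: le_trans (dist_cos_le d1) (scaled_decay_le m_gt0).
Qed.

Lemma sin_cvg : (fun m => sxy m / rad m) @ \oo --> (0 : R).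
Proof.
apply: cvg_dist_le_large_exponent => m m_gt0 d1 d2.
exact: le_trans (dist_sin_le d1) (scaled_decay_le m_gt0).
Qed.

Lemma logm_symmx_cvg :
  (fun m => (m%:R)^-1 *: logm (symmx (sxx m) (sxy m) (syy m))) @ \oo -->
  a t0 *: line_proj 1 0 + a ts *: line_proj (-1) 0.
Proof.
rewrite -[X in line_proj (-1) X]oppr0.
apply: cvg_trans _ (cvgD (cvgZ ln_eig_hi_cvg (line_proj_cvg cos_cvg sin_cvg))
  (cvgZ ln_eig_lo_cvg (line_proj_cvg (cvgN cos_cvg) (cvgN sin_cvg)))).
apply: near_eq_cvg; apply: filterS large_exponent_eventually => m [_ d1 d2].
have [cs1 ->] := symmx_spectral (lt0r_neq0 (rad_gt0 d1)).
have eig_lo_gt0 : 0 < eig_lo m.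
  apply: lt_le_trans (eig_lo_ge d1 d2).
  by rewrite mulr_gt0 ?divr_gt0 ?sqr_y_ts_gt0 ?weight_gt0.
have eig_hi_gt0 := lt_le_trans (weight_gt0 m t0) (eig_hi_ge m).
rewrite (logm_spectral cs1 eig_hi_gt0 eig_lo_gt0) //.
by rewrite scalerDr !scalerA ![_^-1 * _]mulrC.
Qed.

End DominantDirection.

Lemma big_pair_bool (R : realType) (I : finType) (F : I * bool -> R) :
  \sum_t F t = \sum_i (F (i, true) + F (i, false)).
Proof.
rewrite (eq_bigr (fun t => F (t.1, t.2))); last by case.
rewrite -(pair_bigA _ (fun i b => F (i, b))).
by apply: eq_bigr => i _; rewrite big_bool.
Qed.

Section RotatedFrames.
Variable R : realType.
Implicit Types (p : R) (w : 'cV[R]_2).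

Lemma outer_uvec p :
  uvec p *m (uvec p)^T = line_proj (cos p ^+ 2 - sin p ^+ 2) (2 * (cos p * sin p)).
Proof.
by have cs1 := cos2Dsin2 p; mx2_entries; rewrite !mxE big_ord1 !mxE /=; lra.
Qed.

Lemma outer_vvec p : vvec p *m (vvec p)^T =
  line_proj (- (cos p ^+ 2 - sin p ^+ 2)) (- (2 * (cos p * sin p))).
Proof.
by have cs1 := cos2Dsin2 p; mx2_entries; rewrite !mxE big_ord1 !mxE /=; lra.
Qed.

Lemma expm_rotated_diag p (l1 l2 : R) :
  expm (l1 *: (uvec p *m (uvec p)^T) + l2 *: (vvec p *m (vvec p)^T)) =
  expR l1 *: (uvec p *m (uvec p)^T) + expR l2 *: (vvec p *m (vvec p)^T).
Proof.
rewrite outer_uvec outer_vvec expm_idem_pair //; apply: line_proj_idem_pair.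
have -> : (cos p ^+ 2 - sin p ^+ 2) ^+ 2 + (2 * (cos p * sin p)) ^+ 2 =
          (cos p ^+ 2 + sin p ^+ 2) ^+ 2 by ring.
by rewrite cos2Dsin2 expr1n.
Qed.

Lemma aligned_e1 w : w ord0 ord0 ^+ 2 + w ord_max ord0 ^+ 2 = 1 ->
  aligned w (e1 R) <-> w ord_max ord0 = 0.
Proof.
move=> w1; split; first by case=> ->; rewrite !mxE ?oppr0.
move=> w10; move: w1; rewrite w10 expr0n addr0 => /eqP; rewrite sqrf_eq1.
by case/orP=> /eqP w00; [left|right]; apply/matrixP => i j;
  rewrite (ord1 j); case: (ord2P i) => ->; rewrite !mxE /= ?w00 ?w10 ?oppr0.
Qed.

End RotatedFrames.

Section EigenFamily.
Variables (R : realType) (n : nat) (lam mu phi : 'I_n.+1 -> R).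

Definition eig_val (t : 'I_n.+1 * bool) := if t.2 then lam t.1 else mu t.1.
Definition eig_vec (t : 'I_n.+1 * bool) : 'cV[R]_2 :=
  if t.2 then uvec (phi t.1) else vvec (phi t.1).
Definition eig_x t := eig_vec t ord0 ord0.
Definition eig_y t := eig_vec t ord_max ord0.

Lemma eig_xy1 t : eig_x t ^+ 2 + eig_y t ^+ 2 = 1.
Proof.
case: t => i [|]; rewrite /eig_x /eig_y /= !mxE /= ?sqrrN ?cos2Dsin2 //.
by rewrite addrC cos2Dsin2.
Qed.

Lemma sum_expm_symmx (m : nat) :
  \sum_i (expR (m%:R * lam i) *: (uvec (phi i) *m (uvec (phi i))^T)
        + expR (m%:R * mu i) *: (vvec (phi i) *m (vvec (phi i))^T)) =
  symmx (sxx eig_val eig_x m) (sxy eig_val eig_x eig_y m) (syy eig_val eig_y m).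
Proof.
mx2_entries; rewrite !mxE /= summxE /sxx /sxy /syy big_pair_bool.
all: apply: eq_bigr => k _.
all: by rewrite !mxE !big_ord1 !mxE /eig_x /eig_y /eig_vec /weight /= !mxE /=; ring.
Qed.

Lemma candidateP z : sin (phi ord0) = 0 ->
  candidate lam mu phi z <-> exists2 t, eig_y t != 0 & z = eig_val t.
Proof.
move=> s0; have aligned_vec t : aligned (eig_vec t) (e1 R) <-> eig_y t = 0.
  by apply: aligned_e1; exact: eig_xy1.
split.
- case=> [[i [_ [not_al ->]]]|[i [not_al ->]]].
  + by exists (i, true) => //; apply/eqP => /(aligned_vec (i, true)).
  + by exists (i, false) => //; apply/eqP => /(aligned_vec (i, false)).
- case=> -[i [|]] y_neq ->; [left|right]; exists i; last first.
    by split=> // /(aligned_vec (i, false)); exact/eqP.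
  split; last by split=> // /(aligned_vec (i, true)); exact/eqP.
  by apply: contraNneq y_neq => ->; rewrite /eig_y /= mxE s0.
Qed.

Lemma is_mu_star_eq z ts : sin (phi ord0) = 0 -> eig_y ts != 0 ->
  (forall t, eig_y t != 0 -> eig_val t <= eig_val ts) ->
  is_mu_star lam mu phi z -> z = eig_val ts.
Proof.
move=> s0 y_ts ts_max [/(candidateP _ s0) [t y_t ->] z_max].
apply/eqP; rewrite eq_le ts_max //=; apply: z_max.
by apply/(candidateP _ s0); exists ts.
Qed.

End EigenFamily.

Lemma diag_line_proj_e2 (R : realType) (l1 l2 : R) :
  (l1 *: line_proj 1 0 + l2 *: line_proj (-1) 0) *m e2 R = l2 *: e2 R.
Proof.
apply/matrixP => i j; rewrite (ord1 j); case: (ord2P i) => ->;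
  rewrite !mxE big_ord_recl big_ord1 !mxE /=; lra.
Qed.

Theorem lemma4 (R : realType) (n : nat) (X : 'I_n.+1 -> 'M[R]_2)
  (lam mu phi : 'I_n.+1 -> R)
  (hspec : forall i, X i = lam i *: (uvec (phi i) *m (uvec (phi i))^T)
                          + mu i *: (vvec (phi i) *m (vvec (phi i))^T))
  (horder : forall i, mu i <= lam i)
  (hphi : forall i, - (pi / 2) <= phi i <= pi / 2)
  (hlam_top : forall i, mu i < lam ord0)
  (hlam_uniq : forall i, i != ord0 -> lam i < lam ord0)
  (hu1 : uvec (phi ord0) = e1 R) :
  exists S : 'M[R]_2,
    ((fun m : nat => (m%:R)^-1 *: logm (\sum_i expm (m%:R *: X i))) @ \oo --> S)
    /\ forall mustar, is_mu_star lam mu phi mustar -> S *m e2 R = mustar *: e2 R.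
Proof.
(* [horder] and [hphi] only fix a normal form of the spectral data; the
   argument does not use them. *)
have c0 : cos (phi ord0) = 1.
  by have := congr1 (fun w : 'cV[R]_2 => w ord0 ord0) hu1; rewrite !mxE.
have s0 : sin (phi ord0) = 0.
  by have := congr1 (fun w : 'cV[R]_2 => w ord_max ord0) hu1; rewrite !mxE.
pose t0 : 'I_n.+1 * bool := (ord0, true).
have y_t0 : eig_y phi t0 = 0 by rewrite /eig_y /= mxE s0.
have [dl dl_gt0 gap] : exists2 dl, 0 < dl &
    forall t, t != t0 -> eig_val lam mu t <= eig_val lam mu t0 - dl.
  apply: finite_gap => -[i [|]] t_neq /=; last exact: hlam_top.
  by apply: hlam_uniq; apply: contraNneq t_neq; rewrite /= => ->.
have y_ord0_false : eig_y phi (ord0, false) != 0.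
  by rewrite /eig_y /= mxE c0 oner_eq0.
case: (@arg_maxP _ _ _ _ (fun t => eig_y phi t != 0) (eig_val lam mu) y_ord0_false).
move=> ts y_ts ts_max.
exists (eig_val lam mu t0 *: line_proj 1 0 + eig_val lam mu ts *: line_proj (-1) 0).
split; last first.
  by move=> z /(is_mu_star_eq s0 y_ts ts_max) ->; exact: diag_line_proj_e2.
have sum_expm m : \sum_i expm (m%:R *: X i) =
    symmx (sxx (eig_val lam mu) (eig_x phi) m)
          (sxy (eig_val lam mu) (eig_x phi) (eig_y phi) m)
          (syy (eig_val lam mu) (eig_y phi) m).
  rewrite -sum_expm_symmx; apply: eq_bigr => i _.
  by rewrite hspec scalerDr !scalerA expm_rotated_diag.
under eq_fun do rewrite sum_expm.
exact: logm_symmx_cvg (@eig_xy1 _ _ phi) y_t0 dl_gt0 gap y_ts ts_max.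
Qed.
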